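(* As formal power series in $q$ (equivalently for $|q|<1$), $$\frac{1}{(q;q)_{\infty}} + 4\sum_{n=1}^{\infty}\frac{(-1)^nq^{n(n+1)/2}}{(q;q)_{n-1}(1-q^{2n})(q^{n+1};q)_{\infty}}=\sum_{n =0}^{\infty}\frac{(-1)^nq^{n(n+1)/2}(1-q^{n+1})}{(q;q)_n(1+q^{n+1})(q^{n+2};q)_{\infty}}.$$
   Context: $(z;q)_n=\prod_{j=0}^{n-1}(1-zq^j)$ and $(z;q)_\infty=\prod_{j\ge0}(1-zq^j)$. *)

From Stdlib Require Import Reals.
From Coquelicot Require Import Coquelicot.

Open Scope C_scope.

Definition cpow (q : C) (n : nat) : C := @pow_n C_Ring q n.

Fixpoint qpoch (z q : C) (n : nat) : C :=
  match n with
  | O => RtoC 1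
  | S m => qpoch z q m * (RtoC 1 - z * cpow q m)
  end.

Definition qpoch_inf (z q : C) : C :=
  @lim C_CompleteNormedModule (filtermap (fun n => qpoch z q n) eventually).

Definition lhs_term (q : C) (n : nat) : C :=
  cpow (RtoC (-1)) n * cpow q (n * (n + 1) / 2)
  / (qpoch q q (n - 1) * (RtoC 1 - cpow q (2 * n)) * qpoch_inf (cpow q (n + 1)) q).

Definition rhs_term (q : C) (n : nat) : C :=
  cpow (RtoC (-1)) n * cpow q (n * (n + 1) / 2) * (RtoC 1 - cpow q (n + 1))
  / (qpoch q q n * (RtoC 1 + cpow q (n + 1)) * qpoch_inf (cpow q (n + 2)) q).

From Stdlib Require Import Reals Lra Lia Classical.
From Coquelicot Require Import Coquelicot.
Open Scope C_scope.

(* Put a_n = (-1)^n q^(n(n+1)/2) and w = q^(n+1), so that a_(n+1) = -w a_n, and split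
   (q;q)_oo = (q;q)_n (1 - w) (q^(n+2);q)_oo.  After multiplication by (q;q)_oo the n-th
   left summand becomes a_n / (1 + q^n), and the n-th right summand becomes
   a_n (1 - w)^2 / (1 + w) = a_n - a_(n+1) + 4 a_(n+1) / (1 + w).
   The a-terms telescope to a_0 = 1, which gives the identity.  All series converge because
   their terms are O(|q|^n); the infinite products converge because the successive
   differences of the partial products are O(|q|^n) as well. *)

Lemma cpow_Cpow : cpow = Cpow.
Proof. reflexivity. Qed.

Lemma Cmod_pow_le1 (q : C) (n : nat) : (Cmod q <= 1)%R -> (Cmod (q ^ n) <= 1)%R.
Proof.
intros Hq. rewrite Cmod_pow, <- (pow1 n).
apply pow_incr. split; [apply Cmod_ge_0 | exact Hq].
Qed.

Lemma Cmod_pow_lt1 (q : C) (n : nat) : (Cmod q < 1)%R -> (0 < n)%nat -> (Cmod (q ^ n) < 1)%R.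
Proof.
intros Hq Hn. rewrite Cmod_pow.
apply pow_lt_1_compat; [split; [apply Cmod_ge_0|]|]; assumption.
Qed.

Lemma Cminus_1_neq0 (w : C) : (Cmod w < 1)%R -> 1 - w <> 0.
Proof.
intros Hw E. replace w with (RtoC 1) in Hw by (rewrite <- (Cplus_0_l w), <- E; ring).
rewrite Cmod_1 in Hw. lra.
Qed.

Lemma Cplus_1_neq0 (w : C) : (Cmod w < 1)%R -> 1 + w <> 0.
Proof.
intros Hw. replace (1 + w) with (1 - - w) by ring.
apply Cminus_1_neq0. now rewrite Cmod_opp.
Qed.

(* No hypothesis on [b], since [/ 0 = 0]: this lets us divide by the tail products
   (q^k;q)_oo without proving that they do not vanish. *)
Lemma Cinv_mult_l (a b : C) : a <> 0 -> / (a * b) = / a * / b.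
Proof.
intros Ha. destruct (classic (b = 0)) as [->|Hb].
- rewrite Cmult_0_r. unfold Cinv; simpl. apply injective_projections; simpl; unfold Rdiv; ring.
- now field.
Qed.

Lemma ex_series_geom_le (u : nat -> C) (c r : R) : (0 <= r < 1)%R ->
  (forall n, Cmod (u n) <= c * r ^ n)%R -> ex_series u.
Proof.
intros Hr Hu.
apply (ex_series_le (K:=C_AbsRing) (V:=C_CompleteNormedModule) _ _ Hu).
apply (ex_series_scal_l (K:=R_AbsRing) (V:=R_NormedModule)), ex_series_geom.
rewrite Rabs_pos_eq; lra.
Qed.

Lemma is_series_telescope (u : nat -> C) :
  ex_series u -> is_series (fun n => u n - u (S n)) (u O).
Proof.
intros [s Hs]. change C in s.
assert (Hs1 : is_series (fun n => u (S n)) (s - u O)).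
{ apply is_series_incr_1. change (is_series u (s - u O + u O)).
  now replace (s - u O + u O) with s by ring. }
pose proof (is_series_minus _ _ _ _ Hs Hs1) as Hd.
change (is_series (fun n => u n - u (S n)) (s - (s - u O))) in Hd.
now replace (s - (s - u O)) with (u O) in Hd by ring.
Qed.

Lemma filterlim_seq_succ {T : Type} (u : nat -> T) (F : (T -> Prop) -> Prop) :
  filterlim (fun n => u (S n)) eventually F -> filterlim u eventually F.
Proof.
intros H P HP. destruct (H P HP) as [N HN].
exists (S N). intros [|n] Hn; [lia|]. apply HN. lia.
Qed.

Lemma filterlim_seq_shift {T : Type} (u : nat -> T) (F : (T -> Prop) -> Prop) (k : nat) :
  filterlim u eventually F -> filterlim (fun n => u (k + n)%nat) eventually F.
Proof.
intros H. eapply filterlim_comp; [|exact H]. apply eventually_subseq. intros n. lia.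
Qed.

Lemma lim_filterlim_seq (u : nat -> C) (l : C) : filterlim u eventually (locally l) ->
  @lim C_CompleteNormedModule (filtermap u eventually) = l.
Proof.
intros H.
apply (filterlim_locally_unique (K:=C_AbsRing) (V:=C_NormedModule) (F:=eventually) u); [|exact H].
apply filterlim_locally. intros eps.
apply (complete_cauchy (T:=C_CompleteNormedModule) (filtermap u eventually)).
- apply filtermap_proper_filter, eventually_filter.
- intros e. exists l. exact (proj1 (filterlim_locally u l) H e).
Qed.

Lemma ex_lim_seq_of_ex_series_diff (u : nat -> C) :
  ex_series (fun n => u (S n) - u n) -> exists l, filterlim u eventually (locally l).
Proof.
intros [s Hs]. change C in s. exists (u O + s).
assert (Hsum : forall n, u (S n) = u O + sum_n (fun k => u (S k) - u k) n).
{ induction n as [|n IH].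
  - rewrite sum_O. change (u 1%nat = u O + (u 1%nat - u O)). ring.
  - rewrite sum_Sn.
    change (u (S (S n)) = u O + (sum_n (fun k => u (S k) - u k) n + (u (S (S n)) - u (S n)))).
    rewrite Cplus_assoc, <- IH. ring. }
apply filterlim_seq_succ.
apply (filterlim_ext (fun n => plus (u O) (sum_n (fun k => u (S k) - u k) n))).
- intros n. now rewrite Hsum.
- eapply filterlim_comp_2; [apply filterlim_const | exact Hs |].
  exact (filterlim_plus (K:=C_AbsRing) (V:=C_NormedModule) (u O) s).
Qed.

Lemma qpoch_S (z q : C) (n : nat) : qpoch z q (S n) = qpoch z q n * (1 - z * q ^ n).
Proof. simpl. now rewrite cpow_Cpow. Qed.

Lemma qpoch_add (z q : C) (n m : nat) :
  qpoch z q (n + m) = qpoch z q n * qpoch (z * q ^ n) q m.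
Proof.
induction m as [|m IH].
- rewrite Nat.add_0_r. simpl. ring.
- rewrite Nat.add_succ_r, !qpoch_S, IH, Cpow_add_r. ring.
Qed.

Lemma qpoch_neq0 (z q : C) (n : nat) : (Cmod z < 1)%R -> (Cmod q <= 1)%R -> qpoch z q n <> 0.
Proof.
intros Hz Hq. induction n as [|n IH]; [apply C1_nz|].
rewrite qpoch_S. apply Cmult_neq_0; [exact IH|]. apply Cminus_1_neq0.
rewrite Cmod_mult. pose proof (Cmod_pow_le1 q n Hq). pose proof (Cmod_ge_0 z). nra.
Qed.

Lemma Cmod_qpoch_le (z q : C) (n : nat) : (Cmod z <= 1)%R -> (Cmod q < 1)%R ->
  (Cmod (qpoch z q n) <= exp (/ (1 - Cmod q)))%R.
Proof.
intros Hz Hq. pose proof (Cmod_ge_0 q) as Hq0. pose proof (Cmod_ge_0 z) as Hz0.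
(* [|1 - z q^j| <= 1 + |q|^j <= exp (|q|^j)], and [sum_(j<n) |q|^j = (1 - |q|^n) / (1 - |q|)] *)
assert (Hpartial : (Cmod (qpoch z q n) <= exp ((1 - Cmod q ^ n) / (1 - Cmod q)))%R).
{ induction n as [|n IH].
  - simpl. rewrite Cmod_1, Rminus_diag, Rdiv_0_l, exp_0. lra.
  - rewrite qpoch_S, Cmod_mult.
    replace ((1 - Cmod q ^ S n) / (1 - Cmod q))%R
      with ((1 - Cmod q ^ n) / (1 - Cmod q) + Cmod q ^ n)%R
      by (rewrite <- tech_pow_Rmult; field; lra).
    rewrite exp_plus. apply Rmult_le_compat; [apply Cmod_ge_0 | apply Cmod_ge_0 | exact IH |].
    eapply Rle_trans; [|apply exp_ineq1_le].
    unfold Cminus. eapply Rle_trans; [apply Cmod_triangle|].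
    rewrite Cmod_opp, Cmod_1, Cmod_mult, Cmod_pow.
    assert (0 <= Cmod q ^ n)%R by (apply pow_le; exact Hq0). nra. }
eapply Rle_trans; [exact Hpartial|].
assert (Hle : ((1 - Cmod q ^ n) / (1 - Cmod q) <= / (1 - Cmod q))%R).
{ assert (0 <= Cmod q ^ n)%R by (apply pow_le; exact Hq0).
  assert (0 < / (1 - Cmod q))%R by (apply Rinv_0_lt_compat; lra).
  unfold Rdiv. nra. }
destruct (Rle_lt_or_eq_dec _ _ Hle) as [Hlt|Heq].
- left. now apply exp_increasing.
- rewrite Heq. now right.
Qed.

Lemma qpoch_inf_cvg (z q : C) : (Cmod z <= 1)%R -> (Cmod q < 1)%R ->
  filterlim (qpoch z q) eventually (locally (qpoch_inf z q)).
Proof.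
intros Hz Hq.
assert (Hdiff : ex_series (fun n => qpoch z q (S n) - qpoch z q n)).
{ apply (ex_series_geom_le _ (exp (/ (1 - Cmod q))) (Cmod q));
    [split; [apply Cmod_ge_0 | exact Hq]|].
  intros n. rewrite qpoch_S.
  replace (qpoch z q n * (1 - z * q ^ n) - qpoch z q n)
    with (- (qpoch z q n * (z * q ^ n))) by ring.
  rewrite Cmod_opp, !Cmod_mult, Cmod_pow.
  assert (0 <= Cmod q ^ n)%R by (apply pow_le, Cmod_ge_0).
  pose proof (Cmod_ge_0 z).
  apply Rmult_le_compat; [apply Cmod_ge_0 | apply Rmult_le_pos; [apply Cmod_ge_0|] | | nra]; auto.
  now apply Cmod_qpoch_le. }
destruct (ex_lim_seq_of_ex_series_diff _ Hdiff) as [l Hl].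
unfold qpoch_inf. now rewrite (lim_filterlim_seq (fun n => qpoch z q n) l Hl).
Qed.

Lemma qpoch_inf_split (z q : C) (n : nat) : (Cmod z <= 1)%R -> (Cmod q < 1)%R ->
  qpoch_inf z q = qpoch z q n * qpoch_inf (z * q ^ n) q.
Proof.
intros Hz Hq.
assert (Hzn : (Cmod (z * q ^ n) <= 1)%R).
{ rewrite Cmod_mult. pose proof (Cmod_pow_le1 q n (Rlt_le _ _ Hq)).
  pose proof (Cmod_ge_0 (q ^ n)). pose proof (Cmod_ge_0 z). nra. }
apply (filterlim_locally_unique (K:=C_AbsRing) (V:=C_NormedModule) (F:=eventually)
         (fun m => qpoch z q (n + m))).
- exact (filterlim_seq_shift _ _ n (qpoch_inf_cvg z q Hz Hq)).
- apply (filterlim_ext (fun m => scal (qpoch z q n) (qpoch (z * q ^ n) q m))).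
  + intros m. now rewrite qpoch_add.
  + eapply filterlim_comp; [exact (qpoch_inf_cvg _ q Hzn Hq) |].
    exact (filterlim_scal_r (K:=C_AbsRing) (V:=C_NormedModule) (qpoch z q n) _).
Qed.

Definition alt_tri (q : C) (n : nat) : C := RtoC (-1) ^ n * q ^ (n * (n + 1) / 2).

Definition alt_tri_frac (q : C) (n : nat) : C := alt_tri q n / (1 + q ^ n).

Lemma triangular_S (n : nat) : (S n * (S n + 1) / 2 = n * (n + 1) / 2 + S n)%nat.
Proof.
replace (S n * (S n + 1))%nat with (n * (n + 1) + S n * 2)%nat by ring.
apply Nat.div_add. lia.
Qed.

Lemma triangular_ge (n : nat) : (n <= n * (n + 1) / 2)%nat.
Proof. apply Nat.div_le_lower_bound; nia. Qed.

Lemma alt_tri_0 (q : C) : alt_tri q 0 = 1.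
Proof. unfold alt_tri. simpl. ring. Qed.

Lemma alt_tri_S (q : C) (n : nat) : alt_tri q (S n) = - (q ^ S n * alt_tri q n).
Proof. unfold alt_tri. rewrite triangular_S, Cpow_add_r, Cpow_S. ring. Qed.

Lemma Cmod_alt_tri_le (q : C) (n : nat) :
  (Cmod q <= 1)%R -> (Cmod (alt_tri q n) <= Cmod q ^ n)%R.
Proof.
intros Hq. unfold alt_tri.
rewrite Cmod_mult, !Cmod_pow, Cmod_R, Rabs_m1, pow1, Rmult_1_l.
replace (n * (n + 1) / 2)%nat with (n + (n * (n + 1) / 2 - n))%nat
  by (pose proof (triangular_ge n); lia).
rewrite pow_add.
pose proof (pow_le _ n (Cmod_ge_0 q)).
pose proof (pow_le _ (n * (n + 1) / 2 - n) (Cmod_ge_0 q)).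
pose proof (Cmod_pow_le1 q (n * (n + 1) / 2 - n) Hq) as Hk. rewrite Cmod_pow in Hk. nra.
Qed.

Lemma Cmod_alt_tri_frac_le (q : C) (n : nat) : (Cmod q < 1)%R ->
  (Cmod (alt_tri_frac q (S n)) <= / (1 - Cmod q) * Cmod q ^ n)%R.
Proof.
intros Hq. pose proof (Cmod_ge_0 q) as Hq0. unfold alt_tri_frac.
assert (Hden : (1 - Cmod q <= Cmod (1 + q ^ S n))%R).
{ assert (Htri : (Cmod (RtoC 1) <= Cmod (1 + q ^ S n) + Cmod (- q ^ S n))%R).
  { replace (RtoC 1) with ((1 + q ^ S n) + - q ^ S n) at 1 by ring. apply Cmod_triangle. }
  rewrite Cmod_opp, Cmod_1, Cmod_pow in Htri.
  change (Cmod q ^ S n)%R with (Cmod q * Cmod q ^ n)%R in Htri.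
  pose proof (Cmod_pow_le1 q n (Rlt_le _ _ Hq)) as Hn. rewrite Cmod_pow in Hn. nra. }
rewrite Cmod_div by (apply Cplus_1_neq0, Cmod_pow_lt1; [exact Hq | lia]).
pose proof (Cmod_alt_tri_le q (S n) (Rlt_le _ _ Hq)) as Ha.
change (Cmod q ^ S n)%R with (Cmod q * Cmod q ^ n)%R in Ha.
pose proof (Cmod_pow_le1 q n (Rlt_le _ _ Hq)) as Hn. rewrite Cmod_pow in Hn.
pose proof (pow_le _ n Hq0).
unfold Rdiv. rewrite Rmult_comm. apply Rmult_le_compat.
- left. apply Rinv_0_lt_compat. lra.
- apply Cmod_ge_0.
- apply Rinv_le_contravar; lra.
- nra.
Qed.

Lemma qpoch_inf_qq_split (q : C) (n : nat) : (Cmod q < 1)%R ->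
  qpoch_inf q q = qpoch q q n * (1 - q ^ S n) * qpoch_inf (q ^ (n + 2)) q.
Proof.
intros Hq.
rewrite (qpoch_inf_split q q (S n) (Rlt_le _ _ Hq) Hq), qpoch_S, <- !Cpow_S.
now replace (n + 2)%nat with (S (S n)) by lia.
Qed.

Lemma lhs_term_eq (q : C) (n : nat) : (Cmod q < 1)%R ->
  lhs_term q (S n) = / qpoch_inf q q * alt_tri_frac q (S n).
Proof.
intros Hq. unfold lhs_term, alt_tri_frac, alt_tri.
rewrite cpow_Cpow, (qpoch_inf_qq_split q n Hq).
replace (S n - 1)%nat with n by lia.
replace (S n + 1)%nat with (n + 2)%nat by lia.
replace (2 * S n)%nat with (S n + S n)%nat by lia.
rewrite Cpow_add_r.
assert (Hw : (Cmod (q ^ S n) < 1)%R) by (apply Cmod_pow_lt1; [exact Hq | lia]).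
pose proof (Cminus_1_neq0 _ Hw) as Hminus. pose proof (Cplus_1_neq0 _ Hw) as Hplus.
pose proof (qpoch_neq0 q q n Hq (Rlt_le _ _ Hq)) as Hpoch.
assert (Hsq : 1 - q ^ S n * q ^ S n <> 0).
{ replace (1 - q ^ S n * q ^ S n) with ((1 - q ^ S n) * (1 + q ^ S n)) by ring.
  now apply Cmult_neq_0. }
unfold Cdiv. rewrite !(Cinv_mult_l _ (qpoch_inf _ q)) by (now apply Cmult_neq_0).
set (iQ := / qpoch_inf (q ^ (n + 2)) q). field. auto.
Qed.

Lemma rhs_term_eq (q : C) (n : nat) : (Cmod q < 1)%R ->
  rhs_term q n = / qpoch_inf q q * (alt_tri q n - alt_tri q (S n) + 4 * alt_tri_frac q (S n)).
Proof.
intros Hq. unfold rhs_term, alt_tri_frac.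
rewrite cpow_Cpow, (qpoch_inf_qq_split q n Hq), alt_tri_S.
fold (alt_tri q n). rewrite (Nat.add_1_r n).
assert (Hw : (Cmod (q ^ S n) < 1)%R) by (apply Cmod_pow_lt1; [exact Hq | lia]).
pose proof (Cminus_1_neq0 _ Hw) as Hminus. pose proof (Cplus_1_neq0 _ Hw) as Hplus.
pose proof (qpoch_neq0 q q n Hq (Rlt_le _ _ Hq)) as Hpoch.
unfold Cdiv. rewrite !(Cinv_mult_l _ (qpoch_inf _ q)) by (now apply Cmult_neq_0).
set (iQ := / qpoch_inf (q ^ (n + 2)) q). field. auto.
Qed.

Theorem corollary4p1 (q : C) (hq : (Cmod q < 1)%R) :
  exists S1 S2 : C,
    is_series (fun n : nat => lhs_term q (S n)) S1 /\
    is_series (fun n : nat => rhs_term q n) S2 /\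
    RtoC 1 / qpoch_inf q q + RtoC 4 * S1 = S2.
Proof.
assert (Hr : (0 <= Cmod q < 1)%R) by (split; [apply Cmod_ge_0 | exact hq]).
assert (Htel : is_series (fun n => alt_tri q n - alt_tri q (S n)) (RtoC 1)).
{ rewrite <- (alt_tri_0 q). apply is_series_telescope, (ex_series_geom_le _ 1 (Cmod q) Hr).
  intros n. rewrite Rmult_1_l. apply Cmod_alt_tri_le. lra. }
destruct (ex_series_geom_le (fun n => alt_tri_frac q (S n)) _ _ Hr
            (fun n => Cmod_alt_tri_frac_le q n hq)) as [F HF].
set (P := qpoch_inf q q). change C in F.
exists (/ P * F), (/ P * (1 + 4 * F)). split; [|split].
- apply (is_series_ext (fun n => scal (/ P) (alt_tri_frac q (S n)))).
  + intros n. now rewrite lhs_term_eq.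
  + exact (is_series_scal (K:=C_AbsRing) (V:=C_NormedModule) _ _ _ HF).
- apply (is_series_ext (fun n => scal (/ P) (plus (alt_tri q n - alt_tri q (S n))
                                              (scal (RtoC 4) (alt_tri_frac q (S n)))))).
  + intros n. now rewrite rhs_term_eq.
  + exact (is_series_scal (K:=C_AbsRing) (V:=C_NormedModule) _ _ _
             (is_series_plus _ _ _ _ Htel
                (is_series_scal (K:=C_AbsRing) (V:=C_NormedModule) (RtoC 4) _ _ HF))).
- unfold Cdiv. ring.
Qed.
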